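(* Assume the setting, hypotheses and Rothe scheme described in the context, and for every sufficiently small $\tau=T/N$ let $\{u_\tau^n\}_{n=1}^N$, $\{\xi_\tau^n\}_{n=1}^N$ be a solution of Problem $\mathcal P_\tau$. Then $u_\tau^1-u_\tau^0\to0$ strongly in $H$ as $\tau\to0$.
   Context: $V$ is a real reflexive separable Banach space with norm $\|\cdot\|$, $H$ is a real separable Hilbert space with inner product $(\cdot,\cdot)$ and norm $|\cdot|$, identified with its dual, and $V\subset H\subset V^*$ with dense continuous embeddings, the embedding $V\subset H$ being compact; $\langle\cdot,\cdot\rangle$ is the $V^*\times V$ duality pairing, with $\langle u,v\rangle=(u,v)$ for $u\in H$, $v\in V$. $U$ is a reflexive Banach space, $T>0$. For locally Lipschitz $J\colon U\to\mathbb R$, $J^0(x;v)=\limsup_{y\to x,\lambda\downarrow0}\frac{J(y+\lambda v)-J(y)}{\lambda}$ and $\partial J(x)=\{\xi\in U^*:J^0(x;v)\ge\langle\xi,v\rangle_{U^*\times U}\ \forall v\in U\}$ (Clarke subdifferential); $\iota^*$ is the adjoint of $\iota$. Hypotheses: (H(A)) $A\colon V\to V^*$ is pseudomonotone (whenever $v_n\to v$ weakly in $V$ and $\limsup_n\langle Av_n,v_n-v\rangle\le0$, then $\langle Av,v-y\rangle\le\liminf_n\langle Av_n,v_n-y\rangle$ for all $y\in V$), $\|Av\|_{V^*}\le a+b\|v\|$ ($a\ge0,b>0$), $\langle Av,v\rangle\ge\alpha\|v\|^2-\beta|v|^2$ ($\alpha>0,\beta\ge0$) for all $v\in V$. (H(J))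 $J$ is locally Lipschitz and $\|\xi\|_{U^*}\le d(1+\|u\|_U)$ for all $u\in U$, $\xi\in\partial J(u)$, $d>0$. (H($\iota$)) $\iota\colon V\to U$ is linear, continuous, compact, and $\iota=\iota_2\circ\iota_1$ where $Z$ is a Banach space with $V\subset Z\subset H$, $V\subset Z$ compact, $Z\subset H$ continuous, $\iota_1\colon V\to Z$ the identity and $\iota_2\colon Z\to U$ linear continuous. (H(f)) $f\in L^2(0,T;V^* )$. (H(0)) $u_0\in H$. Rothe scheme: for $N\in\mathbb N$, $\tau=T/N$, an element $u_\tau^0\in V$ is given for each $\tau$, such that $u_\tau^0\to u_0$ strongly in $H$ as $\tau\to0$ and $\|u_\tau^0\|\le c_0/\sqrt\tau$ with $c_0$ independent of $\tau$. Set $f_\tau^1=\frac1\tau\int_0^\tau f\,dt$ and $f_\tau^n=\frac{3}{2\tau}\int_{(n-1)\tau}^{n\tau}f\,dt-\frac1{2\tau}\int_{(n-2)\tau}^{(n-1)\tau}f\,dt$, $n=2,\dots,N$. Problem $\mathcal P_\tau$: find $\{u_\tau^n\}_{n=1}^N\subset V$ and $\{\xi_\tau^n\}_{n=1}^N\subset U^*$ with $\frac1\tau(u_\tau^1-u_\tau^0)+Au_\tau^1+\iota^*\xi_\tau^1=f_\tau^1$, $\xi_\tau^1\in\partial J(\iota u_\tau^1)$, and for $n=2,\dots,N$: $\frac1\tau(\frac32u_\tau^n-2u_\tau^{n-1}+\frac12u_\tau^{n-2})+Au_\tau^n+\iota^*\xi_\tau^n=f_\tau^n$, $\xi_\tau^n\in\partial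 J(\iota u_\tau^n)$. *)

From HB Require Import structures.
From mathcomp Require Import all_boot all_order all_algebra.
From mathcomp Require Import all_classical all_reals all_analysis.
Set Implicit Arguments. Unset Strict Implicit. Unset Printing Implicit Defensive.
Import Order.TTheory GRing.Theory Num.Theory.
Import numFieldNormedType.Exports.
Local Open Scope classical_set_scope.
Local Open Scope ring_scope.

Section Defs.
Variable R : realType.

Definition is_linmap (X Y : normedModType R) (L : X -> Y) :=
  forall (a : R) (x y : X), L (a *: x + y) = a *: L x + L y.

Definition is_dual (X : normedModType R) (g : X -> R) :=
  (forall (a : R) (x y : X), g (a *: x + y) = a * g x + g y) /\ continuous g.

Definition dnorm (X : normedModType R) (g : X -> R) : R :=
  sup [set `|g x| | x in [set x : X | `|x| <= 1]].

(* reflexivity: the canonical map X -> X^** is onto *)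
Definition reflexive_space (X : normedModType R) :=
  forall Phi : (X -> R) -> R,
    (forall (a : R) g h, is_dual g -> is_dual h ->
        Phi (fun x => a * g x + h x) = a * Phi g + Phi h) ->
    (exists C : R, forall g, is_dual g -> `|Phi g| <= C * dnorm g) ->
    exists x : X, forall g, is_dual g -> Phi g = g x.

Definition separable_space (X : normedModType R) :=
  exists s : nat -> X, closure (range s) = setT.

Definition compact_map (X Y : normedModType R) (L : X -> Y) :=
  compact (closure (L @` [set x : X | `|x| <= 1])).

Definition weak_cvg (X : normedModType R) (xs : nat -> X) (x : X) :=
  forall g, is_dual g -> (fun n => g (xs n)) @ \oo --> g x.

(* pseudomonotone operator A : V -> V^*, A v w = <A v, w> *)
Definition pseudomonotone (V : normedModType R) (A : V -> V -> R) :=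
  forall (vs : nat -> V) (v : V), weak_cvg vs v ->
    (limn_esup (fun n => (A (vs n) (vs n - v))%:E) <= 0)%E ->
    forall y : V,
      ((A v (v - y))%:E <= limn_einf (fun n => (A (vs n) (vs n - y))%:E))%E.

Definition locally_lipschitz (U : normedModType R) (J : U -> R) :=
  forall x : U, exists r : R, exists L : R, 0 < r /\
    forall y z : U, `|y - x| < r -> `|z - x| < r -> `|J y - J z| <= L * `|y - z|.

(* Clarke generalized directional derivative
   J^0(x;v) = limsup_{y -> x, lam \downarrow 0} (J(y + lam v) - J y) / lam *)
Definition clarke_dd (U : normedModType R) (J : U -> R) (x v : U) : \bar R :=
  ereal_inf [set ereal_sup
               [set r : \bar R | exists (y : U) (lam : R),
                  [/\ `|y - x| < delta, 0 < lam < delta &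
                      r = ((J (y + lam *: v) - J y) / lam)%:E]]
            | delta in [set delta : R | 0 < delta]].

Definition clarke_subdiff (U : normedModType R) (J : U -> R) (x : U) :
    set (U -> R) :=
  [set xi | is_dual xi /\ forall v : U, ((xi v)%:E <= clarke_dd J x v)%E].


Definition is_inner_product (H : normedModType R) (ip : H -> H -> R) :=
  [/\ forall (a : R) x y z, ip (a *: x + y) z = a * ip x z + ip y z,
      forall x y, ip x y = ip y x &
      forall x, ip x x = `|x| ^+ 2].

Definition intf (V0 : normedModType R) (f : R -> (V0 -> R)) (s e : R) (v : V0) : R :=
  \int[lebesgue_measure]_(t in [set t : R | s <= t <= e]) f t v.

(* the Rothe right-hand sides f_tau^n in V^* (as functionals on V) *)
Definition ftau (V0 : normedModType R) (f : R -> (V0 -> R)) (tau : R) (n : nat)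
    (v : V0) : R :=
  if n == 1%N then tau^-1 * intf f 0 tau v
  else (3 / (2 * tau)) * intf f ((n%:R - 1) * tau) (n%:R * tau) v
       - (2 * tau)^-1 * intf f ((n%:R - 2) * tau) ((n%:R - 1) * tau) v.

(* Problem P_tau: u 0 = u_tau^0 is given; u n, xi n for 1 <= n <= N *)
Definition rothe_solution (V H U : normedModType R) (ip : H -> H -> R)
    (j : V -> H) (A : V -> V -> R) (iota : V -> U) (J : U -> R)
    (f : R -> (V -> R)) (tau : R) (N : nat) (u : nat -> V) (xi : nat -> (U -> R)) :=
  forall n : nat, (1 <= n <= N)%N ->
    clarke_subdiff J (iota (u n)) (xi n) /\
    forall v : V,
      tau^-1 * ip (j (if n == 1%N then u 1%N - u 0%N
                      else (3 / 2 : R) *: u n - 2 *: u n.-1 + (1 / 2 : R) *: u n.-2))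
                  (j v)
      + A (u n) v + xi n (iota v) = ftau f tau n v.

End Defs.

Set Warnings "-notation-overridden,-ambiguous-paths,-notation-incompatible-prefix".
Set Warnings "-redundant-canonical-projection".
From HB Require Import structures.
From mathcomp Require Import all_boot all_order all_algebra.
From mathcomp Require Import all_classical all_reals all_analysis.
From mathcomp Require Import ring lra measurable_realfun.
Import Order.TTheory GRing.Theory Num.Theory.
Import numFieldNormedType.Exports.
Local Open Scope classical_set_scope.
Local Open Scope ring_scope.

(* Fix [z] in V with [|u0 - z|] small (V is dense in H) and test the first Rothe step
   with [v = u_tau^1 - z].  Writing [S = |u_tau^1 - u_tau^0|], the difference quotient
   gives [(u_tau^1 - u_tau^0, v) >= S^2 - S |u_tau^0 - z|]; the coercivity of [A], the
   growth of the Clarke subdifferential combined with Ehrling's inequality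
   [|iota v| <= e ||v|| + C_e |v|] (from the compact factorisation of [iota]), and
   Young's inequality for [int_0^tau <f, v>] yield
     [S^2 <= S |u_tau^0 - z| + tau (c + c' S^2) + (2 / alpha) int_0^tau ||f||^2]
   with [c, c'] depending on [z] but not on [tau].  As [tau -> 0] the last two terms
   vanish and [|u_tau^0 - z|] tends to [|u0 - z|], so [S] is eventually small. *)

Section LinearMap.
Context {R : realType} {X Y : normedModType R} {L : X -> Y}.
Hypothesis linL : is_linmap L.

#[local] HB.instance Definition _ := GRing.isLinear.Build R X Y *:%R L linL.

Lemma linmapB x y : L (x - y) = L x - L y.
Proof. exact: linearB. Qed.

Lemma linmap_bounded : continuous L ->
  exists2 C : R, 0 < C & forall x, `|L x| <= C * `|x|.
Proof.
move=> /linear_bounded_continuous/linear_boundedP/pinfty_ex_gt0[C C0 LC].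
by exists C.
Qed.

End LinearMap.

Section DualNorm.
Context {R : realType} {X : normedModType R} {g : X -> R}.
Hypothesis dual_g : is_dual g.

#[local] HB.instance Definition _ := GRing.isLinear.Build R X R *%R g dual_g.1.

Lemma dual0 : g 0 = 0.
Proof. exact: linear0. Qed.

Lemma dualB x y : g (x - y) = g x - g y.
Proof. exact: linearB. Qed.

Lemma has_ubound_dual_ball : has_ubound [set `|g x| | x in [set x : X | `|x| <= 1]].
Proof.
have [C C0 gC] := @linmap_bounded _ _ R g dual_g.1 dual_g.2.
by exists C => _ [x /= x1 <-]; rewrite (le_trans (gC x)) // ler_piMr // ltW.
Qed.

Lemma dnorm_dual_ge0 : 0 <= dnorm g.
Proof.
apply: le_trans (normr_ge0 (g 0)) _; apply: (ub_le_sup has_ubound_dual_ball).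
by exists 0 => //=; rewrite normr0.
Qed.

Lemma dual_norm_le x : `|g x| <= dnorm g * `|x|.
Proof.
have [->|x0] := eqVneq x 0; first by rewrite linear0 !normr0 mulr0.
have nx : 0 < `|x| by rewrite normr_gt0.
have : `|g (`|x|^-1 *: x)| <= dnorm g.
  apply: (ub_le_sup has_ubound_dual_ball); exists (`|x|^-1 *: x) => //=.
  by rewrite normrZ ger0_norm ?invr_ge0 // mulVf ?gt_eqF.
by rewrite linearZ normrM ger0_norm ?invr_ge0 // mulrC -ler_pdivlMr ?invr_gt0 // invrK.
Qed.

Lemma dnorm_le_bound {M : R} : 0 <= M -> (forall x, `|g x| <= M * `|x|) -> dnorm g <= M.
Proof.
move=> M0 gM; apply: ge_sup; first by exists `|g 0|, 0 => //=; rewrite normr0.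
by move=> _ [x /= x1 <-]; rewrite (le_trans (gM x)) // ler_piMr.
Qed.

End DualNorm.

Section InnerProduct.
Context {R : realType} {H : normedModType R} {ip : H -> H -> R}.
Hypothesis ip_inner : is_inner_product ip.

Lemma ipDl x y z : ip (x + y) z = ip x z + ip y z.
Proof. by case: ip_inner => linl _ _; rewrite -[x]scale1r linl mul1r scale1r. Qed.

Lemma ip_polar x y : ip x y *+ 2 = `|x + y| ^+ 2 - `|x| ^+ 2 - `|y| ^+ 2.
Proof.
case: ip_inner => _ sym sqr; rewrite -!sqr ipDl (sym x (x + y)) (sym y (x + y)) !ipDl.
by rewrite (sym y x) mulr2n; lra.
Qed.

Lemma ip_ge_normM x y : - (`|x| * `|y|) <= ip x y.
Proof.
have := ip_polar x y; rewrite mulr2n => polar.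
have := lerB_normD x y; have := lerB_normD y x; rewrite [y + x]addrC => yx xy.
have : 0 <= (`|x + y| - (`|x| - `|y|)) * (`|x + y| + (`|x| - `|y|)).
  by apply: mulr_ge0; lra.
nra.
Qed.

Lemma ip_addr_ge x y : `|x| ^+ 2 - `|x| * `|y| <= ip x (x + y).
Proof.
case: ip_inner => _ sym sqr; rewrite sym ipDl sqr (sym y).
by have := ip_ge_normM x y; lra.
Qed.

End InnerProduct.

Lemma cluster_map_cvg {T U : topologicalType} (F : set_system T) {FF : Filter F}
    (f : T -> U) (p : T) (l : U) : hausdorff_space U ->
  cluster F p -> {for p, continuous f} -> f @ F --> l -> f p = l.
Proof.
move=> hU; rewrite cluster_cvgE => -[G PG [Gp FG]] fp Ffl.
apply: (cvg_unique hU (F := f @ G)); first exact: cvg_trans (cvg_app f Gp) fp.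
exact: cvg_trans (cvg_app f FG) Ffl.
Qed.

Lemma compact_map_cluster {R : realType} {X Y : normedModType R} {L : X -> Y}
    {w : nat -> X} :
  compact_map L -> (forall n, `|w n| <= 1) -> exists p, cluster ((L \o w) @ \oo) p.
Proof.
move=> cptL w1.
have wL : ((L \o w) @ \oo) (closure (L @` [set x | `|x| <= 1])).
  by exists 0%N => // n _ /=; exact/subset_closure/imageP/w1.
by have [p [_ clp]] := cptL _ _ wL; exists p.
Qed.

Lemma dense_range_near {R : realType} {X Y : normedModType R} {L : X -> Y} :
  closure (range L) = setT -> forall y e, 0 < e -> exists x, `|y - L x| < e.
Proof.
move=> dense_L y e e0; have : closure (range L) y by rewrite dense_L.
move=> /(_ _ (nbhsx_ballx y e e0)) [_ [[x _ <-]]].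
by rewrite -ball_normE; exists x.
Qed.

Lemma cvg_divn0 {R : realType} (T : R) : (fun N : nat => T / N%:R) @ \oo --> 0.
Proof.
rewrite -(mulr0 T); apply: cvgM; first exact: cvg_cst.
apply/gtr0_cvgV0; last exact: cvgr_idn.
by near=> N; rewrite ltr0n; near: N; exact: nbhs_infty_gt.
Unshelve. all: by end_near. Qed.

Section Ehrling.
Context {R : realType} {V Z H : normedModType R} {jVZ : V -> Z} {jZH : Z -> H}.
Hypotheses (linVZ : is_linmap jVZ) (contVZ : continuous jVZ) (cptVZ : compact_map jVZ).
Hypotheses (linZH : is_linmap jZH) (injZH : injective jZH) (contZH : continuous jZH).

#[local] HB.instance Definition _ := GRing.isLinear.Build R V Z *:%R jVZ linVZ.
#[local] HB.instance Definition _ := GRing.isLinear.Build R Z H *:%R jZH linZH.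

Lemma ehrling (eps : R) : 0 < eps ->
  exists2 C, 0 <= C & forall v, `|jVZ v| <= eps * `|v| + C * `|jZH (jVZ v)|.
Proof.
move=> eps0; apply: contrapT => noC.
have bad n : exists w, `|w| <= 1 /\ eps + n%:R * `|jZH (jVZ w)| < `|jVZ w|.
  have [v] : exists v, eps * `|v| + n%:R * `|jZH (jVZ v)| < `|jVZ v|.
    apply: contrapT => small; apply: noC; exists n%:R => // v.
    by rewrite leNgt; apply/negP => lt; apply: small; exists v.
  have [->|v0 vbad] := eqVneq v 0; first by rewrite !linear0 !normr0 !mulr0 addr0 ltxx.
  have nv : 0 < `|v| by rewrite normr_gt0.
  exists (`|v|^-1 *: v); rewrite normrZ ger0_norm ?invr_ge0 // mulVf ?gt_eqF //.
  split => //; rewrite !linearZ !normrZ ger0_norm ?invr_ge0 // -(ltr_pM2l nv).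
  by rewrite mulrDr mulrCA !(mulVKf (lt0r_neq0 nv)) (mulrC _ eps).
have [w /all_and2[w1 wbad]] := choice bad.
have [M M0 VZM] := linmap_bounded linVZ contVZ.
(* A cluster point [p] of [jVZ (w n)] has [jZH p = 0], so [p = 0], whereas
   [eps <= |jVZ (w n)|] for all [n]. *)
have [p clp] := compact_map_cluster cptVZ w1.
have ZH0 : (jZH \o (jVZ \o w)) @ \oo --> 0.
  apply: norm_cvg0; apply: (@squeeze_cvgr _ _ _ _ (cst 0) (fun n => M / n%:R)).
  - exists 1%N => // n /= n1; have n0 : 0 < n%:R :> R by rewrite ltr0n.
    rewrite normr_ge0 ler_pdivlMr // mulrC /=.
    by have := wbad n; have := VZM (w n); have := w1 n; nra.
  - exact: cvg_cst.
  - exact: cvg_divn0.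
have p0 : p = 0.
  by apply: injZH; rewrite linear0; apply: cluster_map_cvg clp (contZH p) ZH0.
have [q [/= epsq qeps]] : [set q | eps <= `|q|] `&` [set q : Z | `|q| < eps] !=set0.
  apply: clp; last by rewrite p0; exact: nbhs0_lt.
  by exists 0%N => // n _ /=; apply: ltW; apply: le_lt_trans (wbad n); rewrite lerDl.
by move: (le_lt_trans epsq qeps); rewrite ltxx.
Unshelve. all: by end_near. Qed.

Lemma ehrling_comp {U : normedModType R} {L : Z -> U} :
  is_linmap L -> continuous L -> forall eps, 0 < eps ->
  exists2 C, 0 <= C & forall v, `|L (jVZ v)| <= eps * `|v| + C * `|jZH (jVZ v)|.
Proof.
move=> linL contL eps eps0; have [CL CL0 LCL] := linmap_bounded linL contL.
have [C C0 VZC] := ehrling (eps / CL) (divr_gt0 eps0 CL0).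
exists (CL * C); first by rewrite mulr_ge0 // ltW.
move=> v; apply: le_trans (LCL _) _; apply: le_trans (ler_wpM2l (ltW CL0) (VZC v)) _.
by rewrite mulrDr mulrA (mulrC CL) divfK ?gt_eqF // mulrA.
Qed.

End Ehrling.

Lemma measurable_dnorm {R : realType} {V : normedModType R} {d} {T : measurableType d}
    {f : T -> V -> R} {D : set T} :
  separable_space V -> (forall t, is_dual (f t)) ->
  (forall v, measurable_fun D (fun t => f t v)) ->
  measurable_fun D (fun t => dnorm (f t)).
Proof.
move=> [s dense_s] dual_f meas_f.
(* On the dense sequence [s] the supremum defining [dnorm] becomes countable;
   [x / 0 = 0] makes [phi k t = 0] when [s k = 0]. *)
pose phi k t := `|f t (s k)| / `|s k|.
have phi_ge0 k t : 0 <= phi k t by rewrite divr_ge0.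
have phi_le k t : phi k t <= dnorm (f t).
  rewrite /phi; have [->|sk0] := eqVneq (s k) 0.
    by rewrite normr0 invr0 mulr0; exact: dnorm_dual_ge0 (dual_f t).
  by rewrite ler_pdivrMr ?normr_gt0 //; exact: dual_norm_le (dual_f t) _.
have phi_ub t : has_ubound (range (phi ^~ t)) by exists (dnorm (f t)) => _ [k _ <-].
suff dnormE t : dnorm (f t) = sups (phi ^~ t) 0%N.
  rewrite (funext dnormE); apply: measurable_fun_sups => [t _ //|k].
  by apply: measurable_funM => //; apply: measurableT_comp.
set c := sups _ _.
have phi_c k : phi k t <= c by apply: ub_le_sup; [exact: has_ubound_sdrop | exists k].
have c0 : 0 <= c := le_trans (phi_ge0 0%N t) (phi_c 0%N).
apply/le_anti/andP; split; last first.
  by apply: ge_sup => [|_ [k _ <-]]; [exists (phi 0%N t), 0%N | exact: phi_le].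
apply: (dnorm_le_bound c0) => v.
have closedA : closed [set v | `|f t v| - c * `|v| <= 0].
  apply: (@preimage_closed _ _ (fun v => `|f t v| - c * `|v|) [set x | x <= 0]).
    move=> x _; apply: cvgB; first by apply: cvg_norm; exact: (dual_f t).2.
    by apply: cvgM; [exact: cvg_cst | apply: cvg_norm; exact: cvg_id].
  exact: closed_le.
have sA : range s `<=` [set v | `|f t v| - c * `|v| <= 0].
  move=> _ [k _ <-] /=; rewrite subr_le0.
  have [->|sk0] := eqVneq (s k) 0; first by rewrite (dual0 (dual_f t)) !normr0 mulr0.
  by rewrite -ler_pdivrMr ?normr_gt0 //; exact: phi_c.
have := closureS sA; rewrite dense_s -(closure_id _).1 // => /(_ v I) /=.
by rewrite subr_le0.
Qed.

Lemma young_le {R : realFieldType} (c x y : R) : 0 < c ->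
  x * y <= c * y ^+ 2 + (4 * c)^-1 * x ^+ 2.
Proof.
move=> c0; rewrite -subr_ge0.
have -> : c * y ^+ 2 + (4 * c)^-1 * x ^+ 2 - x * y = (4 * c)^-1 * (2 * c * y - x) ^+ 2.
  by field; rewrite gt_eqF.
by rewrite mulr_ge0 ?sqr_ge0 // invr_ge0 mulr_ge0 // ltW.
Qed.

Section IntervalIntegral.
Context {R : realType}.
Local Notation mu := (@lebesgue_measure R).

Lemma measurable_cc (a b : R) : measurable [set t : R | a <= t <= b].
Proof. by rewrite -set_itvcc; exact: measurable_itv. Qed.

Lemma cc_subset (a : R) {b c : R} : b <= c -> [set t : R | a <= t <= b] `<=` [set t | a <= t <= c].
Proof. by move=> bc t /= /andP[-> /le_trans]; apply. Qed.

Lemma lebesgue_measure_cc (a b : R) : a <= b -> mu [set t : R | a <= t <= b] = (b - a)%:E.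
Proof.
move=> ab; rewrite -set_itvcc lebesgue_measure_itv /= lte_fin.
have [_|ba] := ltP a b; first by rewrite EFinB.
by rewrite (_ : b = a) ?subrr //; apply/le_anti/andP; split.
Qed.

Lemma Rintegral_young_le (tau c r : R) (g phi : R -> R) : 0 <= tau -> 0 < c ->
  mu.-integrable [set t | 0 <= t <= tau] (EFin \o (fun t => g t ^+ 2)) ->
  measurable_fun [set t | 0 <= t <= tau] phi ->
  (forall t, `|phi t| <= g t * r) ->
  `|\int[mu]_(t in [set t | 0 <= t <= tau]) phi t| <=
    c * tau * r ^+ 2 + (4 * c)^-1 * \int[mu]_(t in [set t | 0 <= t <= tau]) (g t ^+ 2).
Proof.
move=> tau0 c0 int_g2 meas_phi phi_le; set D := [set t | 0 <= t <= tau].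
have mD : measurable D := measurable_cc 0 tau.
pose psi t := c * r ^+ 2 + (4 * c)^-1 * g t ^+ 2.
have phi_psi t : `|phi t| <= psi t by apply: le_trans (phi_le t) (young_le _ _ _ c0).
have int_cst : mu.-integrable D (EFin \o cst (c * r ^+ 2)).
  apply/integrableP; split; first exact/measurable_EFinP/measurable_cst.
  rewrite (eq_integral (fun _ => (c * r ^+ 2)%:E)); last first.
    by move=> t _ /=; rewrite ger0_norm // mulr_ge0 ?sqr_ge0 // ltW.
  by rewrite integral_cst //= lebesgue_measure_cc // -EFinM ltry.
have int_g2' : mu.-integrable D (EFin \o (fun t => (4 * c)^-1 * g t ^+ 2)).
  have -> : EFin \o (fun t => (4 * c)^-1 * g t ^+ 2) =
      (fun t => ((4 * c)^-1)%:E * (EFin \o (fun t => g t ^+ 2)%R) t)%E.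
    by apply/funext => t; rewrite /= EFinM.
  exact: integrableZl.
have int_psi : mu.-integrable D (EFin \o psi).
  have -> : EFin \o psi =
      (EFin \o cst (c * r ^+ 2)) \+ (EFin \o (fun t => (4 * c)^-1 * g t ^+ 2)).
    by apply/funext => t; rewrite /= EFinD.
  exact: integrableD.
have int_abs_phi : mu.-integrable D (EFin \o (fun t => `|phi t|)).
  apply: le_integrable int_psi => //; first exact/measurable_EFinP/measurableT_comp.
  by move=> t _ /=; rewrite lee_fin normr_id (le_trans (phi_psi t)) ?ler_norm.
have int_phi : mu.-integrable D (EFin \o phi).
  apply: le_integrable int_psi => //; first exact/measurable_EFinP.
  by move=> t _ /=; rewrite lee_fin (le_trans (phi_psi t)) ?ler_norm.
apply: le_trans (le_normr_Rintegral (mu := mu) mD int_phi) _.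
apply: le_trans (le_Rintegral (mu := mu) mD int_abs_phi int_psi (fun t _ => phi_psi t)) _.
rewrite (RintegralD (mu := mu) mD int_cst int_g2') Rintegral_cst //.
rewrite (RintegralZl (mu := mu) _ mD int_g2).
have -> : fine (mu D) = tau.
  by have := lebesgue_measure_cc 0 tau tau0; rewrite subr0 => muD; rewrite /D muD.
by rewrite mulrAC.
Qed.

Lemma Rintegral_shrink_cvg0 (T : R) (h : R -> R) : 0 < T ->
  mu.-integrable [set t | 0 <= t <= T] (EFin \o h) ->
  (fun N : nat => \int[mu]_(t in [set t | 0 <= t <= T / N%:R]) h t) @ \oo --> 0.
Proof.
rewrite -set_itvcc => T0 int_h.
have := cvg_comp _ _ (cvg_divn0 T) (parameterized_integral_cvg_left T0 int_h).
by rewrite /parameterized_integral /comp; under eq_fun do rewrite set_itvcc.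
Qed.

End IntervalIntegral.

Section EnergyArithmetic.
Context {R : realFieldType}.

Lemma coercive_remainder_le (alpha beta a b d K Q e C : R) :
  0 < alpha -> 0 <= beta -> 0 <= d -> 0 <= Q -> 0 <= C -> 2 * d * e ^+ 2 <= alpha / 4 ->
  exists c0 c1 : R, 0 <= c1 /\ forall X Y P, 0 <= X -> 0 <= Y -> 0 <= P -> P <= e * X + C * Y ->
    alpha / 8 * (X + K) ^+ 2 + (a + b * X) * K + beta * Y ^+ 2 + d * (1 + P) * (P + Q)
      - alpha * X ^+ 2 <= c0 + c1 * Y ^+ 2.
Proof.
move=> alpha0 beta0 d0 Q0 C0 de2.
pose L := b * K + d * (1 + Q) * e; pose M := d * (1 + Q) * C.
have M0 : 0 <= M by rewrite !mulr_ge0 // addr_ge0.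
exists (alpha / 4 * K ^+ 2 + a * K + d * Q + L ^+ 2 / alpha + M / 2).
exists (beta + 2 * d * C ^+ 2 + M / 2); split.
  by rewrite !addr_ge0 ?divr_ge0 // !mulr_ge0 // sqr_ge0.
move=> X Y P X0 Y0 P0 PXY.
have P2 : d * P ^+ 2 <= alpha / 4 * X ^+ 2 + 2 * d * C ^+ 2 * Y ^+ 2.
  have : P ^+ 2 <= 2 * e ^+ 2 * X ^+ 2 + 2 * C ^+ 2 * Y ^+ 2.
    have := sqr_ge0 (e * X - C * Y); have : P ^+ 2 <= (e * X + C * Y) ^+ 2.
      by rewrite ler_sqr ?nnegrE // (le_trans P0 PXY).
    nra.
  have := ler_wpM2r (sqr_ge0 X) de2; nra.
have P1 : d * (1 + Q) * P <= d * (1 + Q) * e * X + M * Y.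
  by have := ler_wpM2l (mulr_ge0 d0 (addr_ge0 ler01 Q0)) PXY; rewrite /M; lra.
have LX : L * X <= alpha / 4 * X ^+ 2 + L ^+ 2 / alpha.
  have alpha4 : 4 * (alpha / 4) = alpha by rewrite mulrC divfK ?pnatr_eq0.
  by have := young_le (alpha / 4) L X (divr_gt0 alpha0 (ltr0n _ 4)); rewrite alpha4; lra.
have MY : M * Y <= M / 2 + M / 2 * Y ^+ 2.
  have := mulr_ge0 M0 (sqr_ge0 (Y - 1)); lra.
have XK : alpha / 8 * (X + K) ^+ 2 <= alpha / 4 * X ^+ 2 + alpha / 4 * K ^+ 2.
  have := mulr_ge0 (ltW alpha0) (sqr_ge0 (X - K)); lra.
have := mulr_ge0 (ltW alpha0) (sqr_ge0 X).
rewrite /L /M in LX P1 MY *; lra.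
Qed.

Lemma energy_bound_lt (S Y Dd tau c0 c1 E M eps : R) :
  0 <= S -> 0 <= Y -> 0 <= tau -> 0 <= c1 -> 0 < eps -> Y <= S + M ->
  S ^+ 2 <= S * Dd + tau * (c0 + c1 * Y ^+ 2) + E ->
  tau * c1 <= 1 / 4 -> tau * (c0 + 2 * c1 * M ^+ 2) + E <= eps ^+ 2 / 8 ->
  Dd <= eps / 4 -> S < eps.
Proof.
move=> S0 Y0 tau0 c10 eps0 YSM energy tau_c1 small Dd_eps.
have Y2 : Y ^+ 2 <= 2 * S ^+ 2 + 2 * M ^+ 2.
  have := sqr_ge0 (S - M).
  have : Y ^+ 2 <= (S + M) ^+ 2 by rewrite ler_sqr ?nnegrE ?(le_trans Y0).
  nra.
have tauY := ler_wpM2l (mulr_ge0 tau0 c10) Y2.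
have tauS := ler_wpM2r (sqr_ge0 S) tau_c1.
have SDd := ler_wpM2l S0 Dd_eps.
rewrite ltNge; apply/negP => epsS.
have : 0 <= (S - eps) * (S / 2 + eps / 4) by rewrite mulr_ge0 ?subr_ge0 //; lra.
have := exprn_gt0 2 eps0; lra.
Qed.

End EnergyArithmetic.

Section FirstRotheStep.
Context {R : realType} {V H U : normedModType R}.
Local Notation mu := (@lebesgue_measure R).
Context {ip : H -> H -> R} {j : V -> H} {A : V -> V -> R} {iota : V -> U} {J : U -> R}.
Context {a b alpha beta d T : R} {f : R -> V -> R}.
Hypotheses (ip_inner : is_inner_product ip) (lin_j : is_linmap j) (lin_iota : is_linmap iota).
Hypotheses (dual_A : forall v, is_dual (A v)) (A_growth : forall v, dnorm (A v) <= a + b * `|v|).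
Hypotheses (alpha0 : 0 < alpha) (beta0 : 0 <= beta).
Hypothesis A_coercive : forall v, alpha * `|v| ^+ 2 - beta * `|j v| ^+ 2 <= A v v.
Hypotheses (d0 : 0 < d)
  (J_growth : forall w zeta, clarke_subdiff J w zeta -> dnorm zeta <= d * (1 + `|w|)).
Hypothesis iota_ehrling : forall e, 0 < e ->
  exists2 C, 0 <= C & forall v, `|iota v| <= e * `|v| + C * `|j v|.
Hypotheses (T0 : 0 < T) (dual_f : forall t, is_dual (f t))
  (meas_f : forall v, measurable_fun [set t | 0 <= t <= T] (fun t => f t v))
  (meas_dnorm_f : measurable_fun [set t | 0 <= t <= T] (fun t => dnorm (f t)))
  (int_dnorm_f : (\int[mu]_(t in [set t | (0 <= t <= T)%R]) ((dnorm (f t)) ^+ 2)%:E < +oo)%E).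

Let energy_f (tau : R) := \int[mu]_(t in [set t | 0 <= t <= tau]) (dnorm (f t) ^+ 2).

Lemma integrable_dnorm_sqr tau : tau <= T ->
  mu.-integrable [set t | 0 <= t <= tau] (EFin \o (fun t => dnorm (f t) ^+ 2)).
Proof.
move=> tauT.
apply: (integrableS (mu := mu) (measurable_cc 0 T) (measurable_cc 0 tau)).
  exact: cc_subset.
apply/integrableP; split; first exact/measurable_EFinP/measurable_funX.
under eq_integral do rewrite /= ger0_norm ?sqr_ge0 //.
exact: int_dnorm_f.
Qed.

Lemma A_test_ge (u1 z : V) :
  alpha * `|u1| ^+ 2 - beta * `|j u1| ^+ 2 - (a + b * `|u1|) * `|z| <= A u1 (u1 - z).
Proof.
have Az : A u1 z <= (a + b * `|u1|) * `|z|.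
  apply: le_trans (ler_norm _) (le_trans (dual_norm_le (dual_A u1) z) _).
  by rewrite ler_wpM2r // A_growth.
by rewrite (dualB (dual_A u1)); have := A_coercive u1; lra.
Qed.

Lemma subdiff_test_ge (z : V) {u1 : V} {xi1 : U -> R} : clarke_subdiff J (iota u1) xi1 ->
  - (d * (1 + `|iota u1|) * (`|iota u1| + `|iota z|)) <= xi1 (iota (u1 - z)).
Proof.
move=> xi1_sub; have xi1_dual := xi1_sub.1.
suff : `|xi1 (iota (u1 - z))| <= d * (1 + `|iota u1|) * (`|iota u1| + `|iota z|).
  by rewrite ler_norml => /andP[].
apply: le_trans (dual_norm_le xi1_dual _) _.
apply: ler_pM; [exact: dnorm_dual_ge0 xi1_dual | exact: normr_ge0 | exact: J_growth xi1_sub |].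
by rewrite (linmapB lin_iota); exact: ler_normB.
Qed.

Lemma intf_le (v : V) {tau r : R} : 0 < tau -> tau <= T -> `|v| <= r ->
  intf f 0 tau v <= alpha / 8 * tau * r ^+ 2 + 2 / alpha * energy_f tau.
Proof.
move=> tau0 tauT vr.
have := Rintegral_young_le tau (alpha / 8) r (fun t => dnorm (f t)) (fun t => f t v)
  (ltW tau0) (divr_gt0 alpha0 (ltr0n _ 8)) (integrable_dnorm_sqr _ tauT)
  (measurable_funS (measurable_cc 0 T) (cc_subset 0 tauT) (meas_f v))
  (fun t => le_trans (dual_norm_le (dual_f t) v) (ler_wpM2l (dnorm_dual_ge0 (dual_f t)) vr)).
have -> : (4 * (alpha / 8))^-1 = 2 / alpha by field; rewrite gt_eqF.
exact: le_trans (ler_norm _).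
Qed.

Lemma first_step_energy (z : V) : exists c0 c1 : R, 0 <= c1 /\
  forall tau u0 u1 xi1, 0 < tau -> tau <= T -> clarke_subdiff J (iota u1) xi1 ->
  (forall v, tau^-1 * ip (j (u1 - u0)) (j v) + A u1 v + xi1 (iota v) =
             tau^-1 * intf f 0 tau v) ->
  `|j (u1 - u0)| ^+ 2 <= `|j (u1 - u0)| * `|j u0 - j z|
                         + tau * (c0 + c1 * `|j u1| ^+ 2) + 2 / alpha * energy_f tau.
Proof.
(* With this [e] the coercivity of [A] absorbs the quadratic growth of the [J] term. *)
pose e := Num.sqrt (alpha / (8 * d)).
have e0 : 0 < e by rewrite sqrtr_gt0 divr_gt0 // mulr_gt0.
have de2 : 2 * d * e ^+ 2 <= alpha / 4.
  rewrite sqr_sqrtr; last by rewrite divr_ge0 ?mulr_ge0 // ltW.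
  by rewrite -subr_ge0 (_ : _ - _ = 0) //; field; rewrite gt_eqF.
have [C C0 iotaC] := iota_ehrling e e0.
have [c0 [c1 [c10 remainder]]] := coercive_remainder_le alpha beta a b d `|z| `|iota z| e C
  alpha0 beta0 (ltW d0) (normr_ge0 _) C0 de2.
exists c0, c1; split => // tau u0 u1 xi1 tau_gt0 tauT xi1_sub step.
have tau0 := ltW tau_gt0.
have step_z : ip (j (u1 - u0)) (j (u1 - z)) + tau * A u1 (u1 - z)
              + tau * xi1 (iota (u1 - z)) = intf f 0 tau (u1 - z).
  have := congr1 ( *%R tau) (step (u1 - z)).
  by rewrite !mulrDr !mulrA mulfV ?gt_eqF // !mul1r.
have time_ge : `|j (u1 - u0)| ^+ 2 - `|j (u1 - u0)| * `|j u0 - j z|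
               <= ip (j (u1 - u0)) (j (u1 - z)).
  have -> : j (u1 - z) = j (u1 - u0) + (j u0 - j z).
    by rewrite !(linmapB lin_j) [RHS]addrA subrK.
  exact: ip_addr_ge.
have := intf_le (u1 - z) tau_gt0 tauT (ler_normB u1 z).
have := ler_wpM2l tau0 (A_test_ge u1 z); have := ler_wpM2l tau0 (subdiff_test_ge z xi1_sub).
have := remainder _ _ _ (normr_ge0 u1) (normr_ge0 (j u1)) (normr_ge0 (iota u1)) (iotaC u1).
move/(ler_wpM2l tau0); lra.
Qed.

Lemma rothe_first_step {tau : R} {N : nat} {u : nat -> V} {xi : nat -> U -> R} :
  (0 < N)%N -> rothe_solution ip j A iota J f tau N u xi ->
  clarke_subdiff J (iota (u 1%N)) (xi 1%N) /\
  forall v, tau^-1 * ip (j (u 1%N - u 0%N)) (j v) + A (u 1%N) v + xi 1%N (iota v) =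
            tau^-1 * intf f 0 tau v.
Proof. by move=> N0 /(_ 1%N N0)[xi1_sub step]; split => // v; rewrite step. Qed.

Context {u0 : H} {u0tau : nat -> V} {u : nat -> nat -> V} {xi : nat -> nat -> U -> R}.
Hypotheses (dense_j : closure (range j) = setT)
  (u0tau_cvg : (fun N => j (u0tau N)) @ \oo --> u0)
  (solves : exists N0, forall N, (N0 <= N)%N -> (0 < N)%N ->
     u N 0%N = u0tau N /\ rothe_solution ip j A iota J f (T / N%:R) N (u N) (xi N)).

Lemma first_difference_cvg0 : (fun N => j (u N 1%N - u N 0%N)) @ \oo --> 0.
Proof.
have [N0 sol] := solves; apply/cvgr0Pnorm_lt => eps eps0.
have [z u0_z] := dense_range_near dense_j u0 (eps / 8) (divr_gt0 eps0 (ltr0n _ 8)).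
have [c0 [c1 [c10 energy]]] := first_step_energy z.
pose M := `|u0| + eps / 8.
have tau_c1_cvg : (fun N : nat => T / N%:R * c1) @ \oo --> 0.
  by rewrite -(mul0r c1); apply: cvgM; [exact: cvg_divn0 | exact: cvg_cst].
have rest_cvg : (fun N : nat => T / N%:R * (c0 + 2 * c1 * M ^+ 2)
                               + 2 / alpha * energy_f (T / N%:R)) @ \oo --> 0.
  rewrite -[0]addr0; apply: cvgD.
    rewrite -(mul0r (c0 + 2 * c1 * M ^+ 2)).
    by apply: cvgM; [exact: cvg_divn0 | exact: cvg_cst].
  rewrite -(mulr0 (2 / alpha)); apply: cvgM; first exact: cvg_cst.
  exact: Rintegral_shrink_cvg0 T0 (integrable_dnorm_sqr T (lexx T)).
near=> N.
have [N0N N_gt0] : (N0 <= N)%N /\ (0 < N)%N.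
  by split; near: N; [exact: nbhs_infty_ge | exact: nbhs_infty_gt].
have [u0N solN] := sol N N0N N_gt0.
have [xi1_sub step] := rothe_first_step N_gt0 solN.
have tau0 : 0 < T / N%:R by rewrite divr_gt0 ?ltr0n.
have tauT : T / N%:R <= T by rewrite ler_pdivrMr ?ltr0n // ler_peMr ?(ltW T0) // ler1n.
have u0_N : `|u0 - j (u N 0%N)| < eps / 8.
  by rewrite u0N; near: N; apply: cvgr_dist_lt => //; rewrite divr_gt0.
apply: (@energy_bound_lt _ _ _ _ _ _ _ _ M _ (normr_ge0 _) (normr_ge0 _) (ltW tau0) c10 eps0 _
  (energy _ _ _ _ tau0 tauT xi1_sub step)).
- have := ler_normD (j (u N 1%N) - j (u N 0%N)) (j (u N 0%N)).
  have := ler_normD u0 (j (u N 0%N) - u0).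
  rewrite subrK addrC subrK distrC (linmapB lin_j) /M; lra.
- by near: N; apply: (cvgr_le 0 tau_c1_cvg).
- by near: N; apply: (cvgr_le 0 rest_cvg); rewrite divr_gt0 ?exprn_gt0.
- by have := ler_distD u0 (j (u N 0%N)) (j z); rewrite [`|j _ - u0|]distrC; lra.
Unshelve. all: by end_near. Qed.

End FirstRotheStep.

Theorem lemma4p2 (R : realType)
  (V H Z U : completeNormedModType R)
  (ip : H -> H -> R) (j : V -> H)
  (jVZ : V -> Z) (jZH : Z -> H) (iota2 : Z -> U) (iota : V -> U)
  (A : V -> V -> R) (a b alpha beta : R)
  (J : U -> R) (d : R)
  (T : R) (f : R -> (V -> R)) (u0 : H) (u0tau : nat -> V)
  (u : nat -> nat -> V) (xi : nat -> nat -> (U -> R)) :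
  (* V: real reflexive separable Banach space *)
  reflexive_space V -> separable_space V ->
  (* H: real separable Hilbert space *)
  is_inner_product ip -> separable_space H ->
  (* V subset H: dense, continuous, compact embedding *)
  is_linmap j -> injective j -> continuous j ->
  closure (range j) = setT -> compact_map j ->
  (* H subset V^star: h |-> (v |-> (h, v)) is injective with dense range *)
  (forall h : H, (forall v : V, ip h (j v) = 0) -> h = 0) ->
  (forall g : V -> R, is_dual g -> forall e : R, 0 < e ->
     exists h : H, dnorm (fun v => g v - ip h (j v)) < e) ->
  (* U: reflexive Banach space *)
  reflexive_space U ->
  (* H(A) *)
  (forall v : V, is_dual (A v)) -> pseudomonotone A ->
  0 <= a -> 0 < b -> (forall v : V, dnorm (A v) <= a + b * `|v|) ->
  0 < alpha -> 0 <= beta ->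
  (forall v : V, A v v >= alpha * `|v| ^+ 2 - beta * `|j v| ^+ 2) ->
  (* H(J) *)
  locally_lipschitz J -> 0 < d ->
  (forall (w : U) (zeta : U -> R), clarke_subdiff J w zeta ->
     dnorm zeta <= d * (1 + `|w|)) ->
  (* H(iota) *)
  is_linmap iota -> continuous iota -> compact_map iota ->
  is_linmap jVZ -> injective jVZ -> continuous jVZ -> compact_map jVZ ->
  is_linmap jZH -> injective jZH -> continuous jZH ->
  (forall v : V, jZH (jVZ v) = j v) ->
  is_linmap iota2 -> continuous iota2 ->
  (forall v : V, iota v = iota2 (jVZ v)) ->
  (* H(f): f in L^2(0,T;V^star) *)
  0 < T ->
  (forall t : R, is_dual (f t)) ->
  (forall v : V, measurable_fun [set t : R | 0 <= t <= T] (fun t => f t v)) ->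
  (\int[lebesgue_measure]_(t in [set t : R | (0 <= t <= T)%R])
      ((dnorm (f t)) ^+ 2)%:E < +oo)%E ->
  (* initial data u_tau^0 (tau = T/N) *)
  ((fun N => j (u0tau N)) @ \oo --> u0) ->
  (exists c0 : R, forall N : nat, (0 < N)%N ->
     `|u0tau N| <= c0 / Num.sqrt (T / N%:R)) ->
  (* for all sufficiently small tau = T/N, (u N, xi N) solves Problem P_tau *)
  (exists N0 : nat, forall N : nat, (N0 <= N)%N -> (0 < N)%N ->
     u N 0%N = u0tau N /\
     rothe_solution ip j A iota J f (T / N%:R) N (u N) (xi N)) ->
  (fun N => j (u N 1%N - u N 0%N)) @ \oo --> (0 : H).
Proof.
move=> _ sepV ip_inner _ lin_j _ _ dense_j _ _ _ _ dual_A _ _ _ A_growth alpha0 beta0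
  A_coercive _ d0 J_growth lin_iota _ _ lin_VZ _ cont_VZ cpt_VZ lin_ZH inj_ZH cont_ZH jE
  lin_i2 cont_i2 iotaE T0 dual_f meas_f int_f u0tau_cvg _ solves.
have iota_ehrling e : 0 < e ->
    exists2 C, 0 <= C & forall v, `|iota v| <= e * `|v| + C * `|j v|.
  move=> e0; have [C C0 iotaC] := ehrling_comp lin_VZ cont_VZ cpt_VZ lin_ZH inj_ZH cont_ZH
    lin_i2 cont_i2 e e0.
  by exists C => // v; rewrite iotaE -jE.
exact: (first_difference_cvg0 ip_inner lin_j lin_iota dual_A A_growth alpha0 beta0
  A_coercive d0 J_growth iota_ehrling T0 dual_f meas_f (measurable_dnorm sepV dual_f meas_f)
  int_f dense_j u0tau_cvg solves).
Qed.
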